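(* Let $\varphi$ be a 3CNF formula with variables $x_1,\dots,x_n$ and clauses $c_1,\dots,c_m$, and let $I(\varphi)$ be the LA-MAPF instance constructed from $\varphi$ as described in the context. If $\varphi$ is satisfiable, then $I(\varphi)$ has a solution.
   Context: LA-MAPF. An instance consists of an undirected graph $G=(V,E)$ embedded in $\mathbb{R}^2$ (each vertex is a point, distinct vertices are distinct points, each edge is the straight segment between its endpoints), agents $a_1,\dots,a_k$ that are disks of a common radius $r>0$ centered at vertices, and start and goal configurations. A configuration assigns to each agent a vertex, distinct agents at distinct vertices. Two consecutive configurations form a transition iff exactly one agent moves along an edge from its vertex to an adjacent vertex and all other agents stay put. A vertex conflict occurs if two agents are at vertices at Euclidean distance $<2r$; an edge conflict occurs if, during a transition in which an agent moves along the segment $[u,v]$, some other (stationary) agent is at a vertex $v'$ at Euclidean distance $<2r$ from the segment $[u,v]$. A solution is a sequence of configurations from the start to the goal configuration in which consecutive configurations form transitions and there are no vertex or edge conflicts. The construction $I(\varphi)$. Let $\varphi$ be a conjunction of $m\ge1$ clauses over variables $x_1,\dots,x_n$ ($n\ge1$), each clause a disjunction of exactly three literals on three distinct variables. Set $r=m$ and $P=2m+1$. Vertices: (Variables) for each $i=1,\dots,n$: $A_i=(Pi,1)$, $B_i=(Pi,\ 4m^2n+2m^2+2mn+5m-1)$, $C_i=(Pi,\ 2m^2+m)$; edges $A_iB_i$, $A_iC_i$. (Clauses) for each $j=1,\dots,m$: $D_j=(0,\ Pj+4m^2n+2m^2+4mn+3m+n-2)$, $E_j=(0,\ j+2m^2n+2m^2+mn+3m-1)$,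 $G_j=(0,\ j+2m^2n+2m^2+mn+2m-1)$, $H_j=(0,\ Pj)$, $I_j=(0,\ Pj+4m^2n+4m^2+4mn+5m+n-2)$, and for each literal of clause $c_j$: if the literal is $x_i$, a vertex $F_j^{x_i}=(Pi,\ j+2m^2+2m-1)$; if it is $\neg x_i$, a vertex $F_j^{\neg x_i}=(Pi,\ j+4m^2n+2m^2+2mn+3m-1)$. Edges: $D_jE_j$, $G_jH_j$, $H_jI_j$, and for each of the three $F$-vertices $F$ of clause $j$, edges $E_jF$ and $FG_j$. (Blocking) $J_i=(0,\ Pi+4m^2n+2m^2+2mn+3m-2)$ for $i=1,\dots,n$, $K=(0,0)$, $L_i=(Pi,0)$ for $i=1,\dots,n$; edges $J_{i}J_{i+1}$ and $L_iL_{i+1}$ for $1\le i<n$, $J_1K$ and $KL_1$. Agents (all of radius $r=m$): for each $i$, a v-agent with start and goal $A_i$; for each $j$, a c-agent with start $D_j$ and goal $I_j$; and $n+1$ b-agents, one starting at each of $J_1,\dots,J_n,K$, each with goal equal to its start. The graph has $5n+8m+1$ vertices and there are $2n+m+1$ agents. *)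

From Stdlib Require Import Reals Lra Lia Arith List.
Open Scope R_scope.

Record lamapf := mkLAMAPF {
  V : Type;
  vvalid : V -> Prop;
  posx : V -> R;
  posy : V -> R;
  adj : V -> V -> Prop;          (* undirected edge relation of G *)
  Ag : Type;
  avalid : Ag -> Prop;
  rad : R;
  start : Ag -> V;
  goal : Ag -> V }.

Definition config (I : lamapf) := Ag I -> V I.

Definition dist2 (x1 y1 x2 y2 : R) : R := sqrt ((x1 - x2) ^ 2 + (y1 - y2) ^ 2).

Definition is_config (I : lamapf) (c : config I) : Prop :=
  (forall a, avalid I a -> vvalid I (c a)) /\
  (forall a b, avalid I a -> avalid I b -> a <> b -> c a <> c b).

Definition vertex_conflict (I : lamapf) (c : config I) : Prop :=
  exists a b, avalid I a /\ avalid I b /\ a <> b /\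
    dist2 (posx I (c a)) (posy I (c a)) (posx I (c b)) (posy I (c b)) < 2 * rad I.

(* Euclidean distance from vertex w to the segment [u,v] is < 2r
   (the segment is compact, so the distance is attained at some point) *)
Definition near_segment (I : lamapf) (w u v : V I) : Prop :=
  exists t : R, 0 <= t <= 1 /\
    dist2 (posx I w) (posy I w)
          (posx I u + t * (posx I v - posx I u))
          (posy I u + t * (posy I v - posy I u)) < 2 * rad I.

Definition moves (I : lamapf) (c c' : config I) (a : Ag I) : Prop :=
  avalid I a /\ adj I (c a) (c' a) /\
  (forall b, avalid I b -> b <> a -> c' b = c b).

Definition transition (I : lamapf) (c c' : config I) : Prop :=
  exists a, moves I c c' a.

Definition edge_conflict (I : lamapf) (c c' : config I) : Prop :=
  exists a b, moves I c c' a /\ avalid I b /\ b <> a /\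
    near_segment I (c b) (c a) (c' a).

Definition is_solution (I : lamapf) (T : nat) (s : nat -> config I) : Prop :=
  (forall a, avalid I a -> s 0%nat a = start I a) /\
  (forall a, avalid I a -> s T a = goal I a) /\
  (forall t, (t <= T)%nat -> is_config I (s t) /\ ~ vertex_conflict I (s t)) /\
  (forall t, (t < T)%nat ->
      transition I (s t) (s (S t)) /\ ~ edge_conflict I (s t) (s (S t))).

Definition has_solution (I : lamapf) : Prop :=
  exists (T : nat) (s : nat -> config I), is_solution I T s.

(* literal x_i (lpos = true) or ~x_i (lpos = false), variable index i in 1..n *)
Record lit := mkLit { lvar : nat; lpos : bool }.

(* formula with variables x_1..x_n and clauses c_1..c_m; cl j k (k < 3) is the
   k-th literal of clause c_j *)
Definition wf_3cnf (n m : nat) (cl : nat -> nat -> lit) : Prop :=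
  (1 <= n)%nat /\ (1 <= m)%nat /\
  forall j, (1 <= j <= m)%nat ->
    (forall k, (k < 3)%nat -> (1 <= lvar (cl j k) <= n)%nat) /\
    lvar (cl j 0%nat) <> lvar (cl j 1%nat) /\ lvar (cl j 0%nat) <> lvar (cl j 2%nat) /\
    lvar (cl j 1%nat) <> lvar (cl j 2%nat).

Definition lit_true (asg : nat -> bool) (l : lit) : Prop := asg (lvar l) = lpos l.

Definition satisfiable (n m : nat) (cl : nat -> nat -> lit) : Prop :=
  exists asg : nat -> bool,
    forall j, (1 <= j <= m)%nat -> exists k, (k < 3)%nat /\ lit_true asg (cl j k).

Inductive vtx :=
  | VA (i : nat) | VB (i : nat) | VC (i : nat)
  | VD (j : nat) | VE (j : nat) | VF (j k : nat) (* F-vertex of k-th literal of c_j *)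
  | VG (j : nat) | VH (j : nat) | VI (j : nat)
  | VJ (i : nat) | VK | VL (i : nat).

Definition in1 (i N : nat) : Prop := (1 <= i <= N)%nat.

Definition vtx_valid (n m : nat) (v : vtx) : Prop :=
  match v with
  | VA i | VB i | VC i | VJ i | VL i => in1 i n
  | VD j | VE j | VG j | VH j | VI j => in1 j m
  | VF j k => in1 j m /\ (k < 3)%nat
  | VK => True
  end.

Definition Pc (m : nat) : R := 2 * INR m + 1.

Definition vx (n m : nat) (cl : nat -> nat -> lit) (v : vtx) : R :=
  let P := Pc m in
  match v with
  | VA i | VB i | VC i | VL i => P * INR i
  | VF j k => P * INR (lvar (cl j k))
  | _ => 0
  end.

Definition vy (n m : nat) (cl : nat -> nat -> lit) (v : vtx) : R :=
  let P := Pc m in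
  let M := INR m in
  let N := INR n in
  match v with
  | VA i => 1
  | VB i => 4 * M ^ 2 * N + 2 * M ^ 2 + 2 * M * N + 5 * M - 1
  | VC i => 2 * M ^ 2 + M
  | VD j => P * INR j + 4 * M ^ 2 * N + 2 * M ^ 2 + 4 * M * N + 3 * M + N - 2
  | VE j => INR j + 2 * M ^ 2 * N + 2 * M ^ 2 + M * N + 3 * M - 1
  | VG j => INR j + 2 * M ^ 2 * N + 2 * M ^ 2 + M * N + 2 * M - 1
  | VH j => P * INR j
  | VI j => P * INR j + 4 * M ^ 2 * N + 4 * M ^ 2 + 4 * M * N + 5 * M + N - 2
  | VF j k =>
      if lpos (cl j k)
      then INR j + 2 * M ^ 2 + 2 * M - 1
      else INR j + 4 * M ^ 2 * N + 2 * M ^ 2 + 2 * M * N + 3 * M - 1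
  | VJ i => P * INR i + 4 * M ^ 2 * N + 2 * M ^ 2 + 2 * M * N + 3 * M - 2
  | VK => 0
  | VL i => 0
  end.

(* the listed edges, in one orientation *)
Definition base_edge (n m : nat) (u v : vtx) : Prop :=
  (exists i, in1 i n /\ ((u = VA i /\ v = VB i) \/ (u = VA i /\ v = VC i))) \/
  (exists j, in1 j m /\
     ((u = VD j /\ v = VE j) \/ (u = VG j /\ v = VH j) \/ (u = VH j /\ v = VI j) \/
      (exists k, (k < 3)%nat /\ ((u = VE j /\ v = VF j k) \/ (u = VF j k /\ v = VG j))))) \/
  (exists i, (1 <= i < n)%nat /\ ((u = VJ i /\ v = VJ (S i)) \/ (u = VL i /\ v = VL (S i)))) \/
  (u = VJ 1%nat /\ v = VK) \/
  (u = VK /\ v = VL 1%nat).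

Definition vtx_adj (n m : nat) (u v : vtx) : Prop :=
  base_edge n m u v \/ base_edge n m v u.

(* agents: v-agents, c-agents, b-agents at J_1..J_n, b-agent at K *)
Inductive agent := Av (i : nat) | Acl (j : nat) | AbJ (i : nat) | AbK.

Definition agent_valid (n m : nat) (a : agent) : Prop :=
  match a with
  | Av i | AbJ i => in1 i n
  | Acl j => in1 j m
  | AbK => True
  end.

Definition agent_start (a : agent) : vtx :=
  match a with Av i => VA i | Acl j => VD j | AbJ i => VJ i | AbK => VK end.

Definition agent_goal (a : agent) : vtx :=
  match a with Av i => VA i | Acl j => VI j | AbJ i => VJ i | AbK => VK end.

Definition Iphi (n m : nat) (cl : nat -> nat -> lit) : lamapf :=
  {| V := vtx; vvalid := vtx_valid n m; posx := vx n m cl; posy := vy n m cl;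
     adj := vtx_adj n m; Ag := agent; avalid := agent_valid n m;
     rad := INR m; start := agent_start; goal := agent_goal |}.

From Stdlib Require Import Reals Lra Lia Classical.
Open Scope R_scope.

(* Fix a satisfying assignment.  Each v-agent moves from A_i to B_i if x_i is
   true and to C_i otherwise; then the b-agents slide down the path
   J_n ... J_1 K L_1 ... L_n onto K L_1 ... L_n, which clears the line x = 0.
   Now the c-agents, one at a time, walk D_j E_j F G_j H_j, choosing the
   F-vertex of a true literal of c_j: the v-agent of its variable has moved to
   the end of its column away from F, so the diagonal edges E_j F and F G_j pass
   at distance >= 2r from every agent (a slope estimate).  The remaining moves,
   H_j to I_j and the way back of the v- and b-agents, are the reversal of the
   same argument run from the goal, where the c-agents wait at I_j instead of D_j.
   All other separations hold because the two vertices (or a vertex and a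
   segment) are 2r apart in a single coordinate. *)

Definition apart (r x y x' y' : R) : Prop :=
  y + 2 * r <= y' \/ y' + 2 * r <= y \/ x + 2 * r <= x' \/ x' + 2 * r <= x.

Lemma apart_sym r x y x' y' : apart r x y x' y' -> apart r x' y' x y.
Proof. unfold apart; tauto. Qed.

Lemma apart_not_close r x y x' y' : apart r x y x' y' -> ~ dist2 x y x' y' < 2 * r.
Proof.
  intros Hs Hd. unfold dist2 in Hd.
  destruct (Rlt_or_le r 0) as [Hr|Hr].
  { pose proof (sqrt_pos ((x - x') ^ 2 + (y - y') ^ 2)); lra. }
  assert (Hk : (2 * r) ^ 2 <= (x - x') ^ 2 + (y - y') ^ 2).
  { pose proof (pow2_ge_0 (x - x')); pose proof (pow2_ge_0 (y - y')).
    destruct Hs as [Hs|[Hs|[Hs|Hs]]]; nra. }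
  apply sqrt_le_1_alt in Hk. rewrite sqrt_pow2 in Hk by lra. lra.
Qed.

Definition seg_apart (r xw yw x0 y0 x1 y1 : R) : Prop :=
  forall t, 0 <= t <= 1 -> apart r xw yw (x0 + t * (x1 - x0)) (y0 + t * (y1 - y0)).

Lemma seg_apart_sym r xw yw x0 y0 x1 y1 :
  seg_apart r xw yw x0 y0 x1 y1 -> seg_apart r xw yw x1 y1 x0 y0.
Proof.
  intros H t Ht.
  replace (x1 + t * (x0 - x1)) with (x0 + (1 - t) * (x1 - x0)) by ring.
  replace (y1 + t * (y0 - y1)) with (y0 + (1 - t) * (y1 - y0)) by ring.
  apply H; lra.
Qed.

Lemma seg_apart_below r xw yw x0 y0 x1 y1 :
  yw + 2 * r <= y0 -> yw + 2 * r <= y1 -> seg_apart r xw yw x0 y0 x1 y1.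
Proof. intros H0 H1 t Ht; left; nra. Qed.

Lemma seg_apart_above r xw yw x0 y0 x1 y1 :
  y0 + 2 * r <= yw -> y1 + 2 * r <= yw -> seg_apart r xw yw x0 y0 x1 y1.
Proof. intros H0 H1 t Ht; right; left; nra. Qed.

Lemma seg_apart_left r xw yw x0 y0 x1 y1 :
  xw + 2 * r <= x0 -> xw + 2 * r <= x1 -> seg_apart r xw yw x0 y0 x1 y1.
Proof. intros H0 H1 t Ht; right; right; left; nra. Qed.

Lemma seg_apart_right r xw yw x0 y0 x1 y1 :
  x0 + 2 * r <= xw -> x1 + 2 * r <= xw -> seg_apart r xw yw x0 y0 x1 y1.
Proof. intros H0 H1 t Ht; right; right; right; nra. Qed.

(* The hypothesis says that the line through [(x1, y1)] and [(0, y0)] passes [2r]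
   above [w] at abscissa [xw + 2r]: left of that abscissa the segment is [2r]
   above [w], right of it [2r] to the right of [w]. *)
Lemma seg_apart_under_diagonal r xw yw y0 x1 y1 :
  0 < x1 -> y1 < y0 ->
  (yw + 2 * r - y1) * x1 <= (x1 - xw - 2 * r) * (y0 - y1) ->
  seg_apart r xw yw x1 y1 0 y0.
Proof.
  intros Hx Hy Hc t Ht.
  destruct (Rle_lt_dec (yw + 2 * r) (y1 + t * (y0 - y1))) as [A|A]; [left; auto|].
  right; right; left.
  destruct (Rle_lt_dec (xw + 2 * r) (x1 + t * (0 - x1))) as [B|B]; [auto|exfalso].
  assert (t * (y0 - y1) * x1 < (yw + 2 * r - y1) * x1)
    by (apply Rmult_lt_compat_r; lra).
  assert ((x1 - xw - 2 * r) * (y0 - y1) < t * x1 * (y0 - y1))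
    by (apply Rmult_lt_compat_r; lra).
  nra.
Qed.

Lemma seg_apart_over_diagonal r xw yw y0 x1 y1 :
  0 < x1 -> y0 < y1 ->
  (y1 - yw + 2 * r) * x1 <= (x1 - xw - 2 * r) * (y1 - y0) ->
  seg_apart r xw yw x1 y1 0 y0.
Proof.
  intros Hx Hy Hc t Ht.
  assert (Hc' : (- yw + 2 * r - - y1) * x1 <= (x1 - xw - 2 * r) * (- y0 - - y1)) by lra.
  destruct (seg_apart_under_diagonal r xw (- yw) (- y0) x1 (- y1) Hx
              ltac:(lra) Hc' t Ht) as [A|[A|A]].
  - right; left; lra.
  - left; lra.
  - right; right; exact A.
Qed.

Section Reachability.
Variable I : lamapf.

Definition agree (c d : config I) : Prop := forall a, avalid I a -> c a = d a.
Definition safe (c : config I) : Prop := is_config I c /\ ~ vertex_conflict I c.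
Definition safe_step (c d : config I) : Prop :=
  transition I c d /\ ~ edge_conflict I c d.

Inductive reach : config I -> config I -> Prop :=
| reach_refl c d : safe c -> agree c d -> reach c d
| reach_step c c' d : safe c -> safe_step c c' -> reach c' d -> reach c d.

Lemma agree_sym c d : agree c d -> agree d c.
Proof. intros H a Ha; symmetry; auto. Qed.

Lemma safe_agree c d : agree c d -> safe c -> safe d.
Proof.
  intros E [[Hv Hd] Hn]; split; [split|].
  - intros a Ha; rewrite <- E by auto; auto.
  - intros a b Ha Hb Hab; rewrite <- !E by auto; auto.
  - intros (a & b & Ha & Hb & Hab & Hc); apply Hn; exists a, b.
    rewrite !E by auto; auto.
Qed.

Lemma safe_step_agree c c' d d' :
  agree c d -> agree c' d' -> safe_step c c' -> safe_step d d'.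
Proof.
  intros E E' [[a [Ha [Hadj Hfix]]] Hn]; split.
  - exists a; split; [auto|split].
    + rewrite <- E, <- E' by auto; auto.
    + intros b Hb Hba; rewrite <- E, <- E' by auto; auto.
  - intros (a' & b & [Ha' [Hadj' Hfix']] & Hb & Hba & Hnear); apply Hn.
    exists a', b; split; [split; [auto|split]|split; [auto|split; [auto|]]].
    + rewrite E, E' by auto; auto.
    + intros b' Hb' Hb'a; rewrite E, E' by auto; auto.
    + rewrite E, E', E by auto; auto.
Qed.

Lemma near_segment_sym w u v : near_segment I w u v -> near_segment I w v u.
Proof.
  intros [t [Ht Hd]]; exists (1 - t); split; [lra|].
  replace (posx I v + (1 - t) * (posx I u - posx I v))
    with (posx I u + t * (posx I v - posx I u)) by ring.
  replace (posy I v + (1 - t) * (posy I u - posy I v))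
    with (posy I u + t * (posy I v - posy I u)) by ring.
  exact Hd.
Qed.

Lemma reach_safe_l c d : reach c d -> safe c.
Proof. destruct 1; auto. Qed.

Lemma reach_agree_l c c' d : agree c c' -> reach c d -> reach c' d.
Proof.
  intros E; destruct 1 as [c d Hs Ecd|c c1 d Hs Hst Hr].
  - apply reach_refl; [exact (safe_agree _ _ E Hs)|].
    intros a Ha; rewrite <- E; auto.
  - apply reach_step with c1; auto.
    + exact (safe_agree _ _ E Hs).
    + apply (safe_step_agree c c1); auto. intros a _; auto.
Qed.

Lemma reach_agree_r c d d' : agree d d' -> reach c d -> reach c d'.
Proof.
  intros E; induction 1 as [c d Hs Ecd|c c1 d Hs Hst Hr IH].
  - apply reach_refl; auto. intros a Ha; rewrite Ecd; auto.
  - apply reach_step with c1; auto.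
Qed.

Lemma reach_trans c d e : reach c d -> reach d e -> reach c e.
Proof.
  induction 1 as [c d Hs Ecd|c c1 d Hs Hst Hr IH]; intros Hde.
  - apply (reach_agree_l d); auto. apply agree_sym; auto.
  - apply reach_step with c1; auto.
Qed.

Section Symmetric.
Hypothesis adj_sym : forall u v, adj I u v -> adj I v u.

Lemma safe_step_sym c d : safe_step c d -> safe_step d c.
Proof.
  intros [[a [Ha [Hadj Hfix]]] Hn]; split.
  - exists a; split; [auto|split].
    + apply adj_sym; auto.
    + intros b Hb Hba; symmetry; auto.
  - intros (a' & b & [Ha' [Hadj' Hfix']] & Hb & Hba & Hnear); apply Hn.
    exists a', b; split; [split; [auto|split]|split; [auto|split; [auto|]]].
    + apply adj_sym; auto.
    + intros b' Hb' Hb'a; symmetry; auto.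
    + rewrite (Hfix' b Hb Hba). apply near_segment_sym; exact Hnear.
Qed.

Lemma reach_sym c d : reach c d -> reach d c.
Proof.
  induction 1 as [c d Hs Ecd|c c1 d Hs Hst Hr IH].
  - apply reach_refl; [exact (safe_agree _ _ Ecd Hs)|apply agree_sym; auto].
  - apply (reach_trans _ c1); auto.
    apply reach_step with c; [exact (reach_safe_l _ _ Hr)|apply safe_step_sym; auto|].
    apply reach_refl; auto. intros a _; auto.
Qed.
End Symmetric.

Lemma reach_path (f : nat -> config I) (T : nat) :
  (forall t, (t <= T)%nat -> safe (f t)) ->
  (forall t, (t < T)%nat -> safe_step (f t) (f (S t))) ->
  reach (f 0%nat) (f T).
Proof.
  intros Hs Hst.
  enough (H : forall k, (k <= T)%nat -> reach (f (T - k)%nat) (f T)).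
  { replace 0%nat with (T - T)%nat by lia. apply H; lia. }
  induction k as [|k IH]; intros Hk.
  - rewrite Nat.sub_0_r. apply reach_refl; auto. intros a _; auto.
  - assert (E : (T - k)%nat = S (T - S k)) by lia.
    apply reach_step with (f (T - k)%nat); [apply Hs; lia| |apply IH; lia].
    rewrite E; apply Hst; lia.
Qed.

Lemma reach_solution c d : reach c d ->
  exists T (s : nat -> config I), s 0%nat = c /\ agree (s T) d /\
    (forall t, (t <= T)%nat -> safe (s t)) /\
    (forall t, (t < T)%nat -> safe_step (s t) (s (S t))).
Proof.
  induction 1 as [c d Hs Ecd|c c1 d Hs Hst Hr (T & s & Hs0 & HT & Hsafe & Hsteps)].
  - exists 0%nat, (fun _ => c); split; [|split; [|split]]; auto; intros; lia.
  - exists (S T), (fun t => match t with O => c | S t' => s t' end).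
    split; [|split; [|split]]; auto.
    + intros [|t] Ht; auto. apply Hsafe; lia.
    + intros [|t] Ht; [rewrite Hs0; auto|apply Hsteps; lia].
Qed.

Lemma has_solution_of_reach : reach (start I) (goal I) -> has_solution I.
Proof.
  intros Hr. destruct (reach_solution _ _ Hr) as (T & s & Hs0 & HT & Hsafe & Hsteps).
  exists T, s; split; [|split; [|split]]; auto.
  intros a _; rewrite Hs0; reflexivity.
Qed.

Definition apart_at (u v : V I) : Prop :=
  apart (rad I) (posx I u) (posy I u) (posx I v) (posy I v).
Definition clear_of (w u v : V I) : Prop :=
  seg_apart (rad I) (posx I w) (posy I w) (posx I u) (posy I u) (posx I v) (posy I v).

Lemma safe_of_apart (c : config I) :
  0 < rad I ->
  (forall a, avalid I a -> vvalid I (c a)) ->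
  (forall a b, avalid I a -> avalid I b -> a <> b -> apart_at (c a) (c b)) ->
  safe c.
Proof.
  intros Hr Hv Hs; split; [split|].
  - exact Hv.
  - intros a b Ha Hb Hab E. specialize (Hs a b Ha Hb Hab).
    unfold apart_at, apart in Hs; rewrite E in Hs; lra.
  - intros (a & b & Ha & Hb & Hab & Hd). exact (apart_not_close _ _ _ _ _ (Hs a b Ha Hb Hab) Hd).
Qed.

Lemma safe_step_of_clear (c d : config I) a :
  (forall u, ~ adj I u u) ->
  avalid I a -> adj I (c a) (d a) ->
  (forall b, avalid I b -> b <> a -> d b = c b) ->
  (forall b, avalid I b -> b <> a -> clear_of (c b) (c a) (d a)) ->
  safe_step c d.
Proof.
  intros Hirr Ha Hadj Hfix Hclear; split; [exists a; split; auto|].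
  intros (a' & b & [Ha' [Hadj' _]] & Hb & Hba & [t [Ht Hd]]).
  destruct (classic (a' = a)) as [->|Hne].
  - exact (apart_not_close _ _ _ _ _ (Hclear b Hb Hba t Ht) Hd).
  - apply (Hirr (c a')). rewrite <- (Hfix a') at 2 by auto. exact Hadj'.
Qed.
End Reachability.

Section Construction.
Variables (n m : nat) (cl : nat -> nat -> lit).
Hypothesis n_pos : (1 <= n)%nat.
Hypothesis m_pos : (1 <= m)%nat.

Local Notation I := (Iphi n m cl).
Local Notation M := (INR m).
Local Notation N := (INR n).
Local Notation P := (Pc m).
Local Notation X := (vx n m cl).
Local Notation Y := (vy n m cl).

Lemma scale_facts :
  1 <= M /\ 1 <= N /\ M <= M ^ 2 /\ M <= M * N /\ N <= M * N /\
  M * N <= M ^ 2 * N /\ M ^ 2 <= M ^ 2 * N.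
Proof.
  assert (HM : 1 <= M) by (apply (le_INR 1); lia).
  assert (HN : 1 <= N) by (apply (le_INR 1); lia).
  assert (0 <= (M ^ 2 - M) * (N - 1)) by (apply Rmult_le_pos; nra).
  repeat split; nra.
Qed.

Ltac coords := pose proof scale_facts; simpl in *; try unfold Pc in *; lra.

Lemma in1_INR i k : in1 i k -> 1 <= INR i <= INR k.
Proof. intros [H1 H2]; split; [apply (le_INR 1)|apply le_INR]; lia. Qed.

Lemma scaled_range i k : in1 i k -> 2 * M + 1 <= P * INR i <= P * INR k.
Proof. intros H. destruct (in1_INR i k H). pose proof scale_facts. unfold Pc; split; nra. Qed.

Lemma scaled_gap a b : (a < b)%nat -> P * INR a + 2 * M + 1 <= P * INR b.
Proof.
  intros H. assert (INR (S a) <= INR b) by (apply le_INR; lia).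
  rewrite S_INR in *. pose proof scale_facts. unfold Pc; nra.
Qed.

Lemma vtx_adj_sym u v : vtx_adj n m u v -> vtx_adj n m v u.
Proof. unfold vtx_adj; tauto. Qed.

Lemma vtx_adj_irrefl u : ~ vtx_adj n m u u.
Proof.
  unfold vtx_adj, base_edge; intros H.
  repeat match goal with
  | H : _ \/ _ |- _ => destruct H
  | H : _ /\ _ |- _ => destruct H
  | H : exists _, _ |- _ => destruct H
  end; subst; try discriminate;
  match goal with H : _ = _ |- _ => injection H; lia end.
Qed.

Lemma apart_rows u v : Y u + 2 * M <= Y v \/ Y v + 2 * M <= Y u -> apart_at I u v.
Proof. unfold apart_at, apart; simpl; tauto. Qed.

Definition column (v : vtx) : nat :=
  match v with
  | VA i | VB i | VC i | VL i => i
  | VF j k => lvar (cl j k)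
  | _ => 0%nat
  end.

Lemma vx_column v : X v = P * INR (column v).
Proof. destruct v; simpl; ring. Qed.

Lemma columns_apart a b : a <> b ->
  P * INR a + 2 * M <= P * INR b \/ P * INR b + 2 * M <= P * INR a.
Proof.
  intros H. destruct (Nat.lt_total a b) as [H1|[H1|H1]]; [|lia|].
  - left; pose proof (scaled_gap a b H1); lra.
  - right; pose proof (scaled_gap b a H1); lra.
Qed.

Lemma apart_columns u v : column u <> column v -> apart_at I u v.
Proof.
  intros H. unfold apart_at, apart; simpl. rewrite !vx_column.
  destruct (columns_apart _ _ H); tauto.
Qed.

Lemma clear_of_columns w u v :
  column u = column v -> column w <> column u -> clear_of I w u v.
Proof.
  intros Huv Hw. unfold clear_of; simpl. rewrite !vx_column, <- Huv.
  destruct (columns_apart _ _ Hw).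
  - apply seg_apart_left; lra.
  - apply seg_apart_right; lra.
Qed.

Definition chain (q : nat) : vtx :=
  if (q <? n)%nat then VJ (n - q) else if (q =? n)%nat then VK else VL (q - n).

Definition chain_top : R := Y (VJ n).

Lemma chain_cases q :
  ((q < n)%nat /\ chain q = VJ (n - q)) \/ (q = n /\ chain q = VK) \/
  ((n < q)%nat /\ chain q = VL (q - n)).
Proof.
  unfold chain. destruct (Nat.ltb_spec q n); [left; auto|].
  destruct (Nat.eqb_spec q n); [right; left; auto|right; right; split; auto; lia].
Qed.

Lemma chain_home i : in1 i n -> chain (n - i) = VJ i.
Proof.
  intros [H1 H2]. unfold chain. rewrite (proj2 (Nat.ltb_lt _ _)) by lia. f_equal; lia.
Qed.

Lemma chain_middle : chain n = VK.
Proof. unfold chain. rewrite Nat.ltb_irrefl, Nat.eqb_refl. auto. Qed.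

Lemma chain_valid q : (q <= 2 * n)%nat -> vtx_valid n m (chain q).
Proof.
  intros H. destruct (chain_cases q) as [[Hq ->]|[[_ ->]|[Hq ->]]]; simpl; unfold in1;
    auto; lia.
Qed.

Lemma chain_left q : (q <= n)%nat -> column (chain q) = 0%nat.
Proof. intros H. destruct (chain_cases q) as [[Hq ->]|[[Hq ->]|[Hq ->]]]; auto; lia. Qed.

Lemma chain_bottom q : (n <= q)%nat -> Y (chain q) = 0.
Proof. intros H. destruct (chain_cases q) as [[Hq ->]|[[Hq ->]|[Hq ->]]]; auto; lia. Qed.

Lemma chain_Y_range q : (q <= 2 * n)%nat -> 0 <= Y (chain q) <= chain_top.
Proof.
  intros H. unfold chain_top. pose proof (scaled_range n n ltac:(unfold in1; lia)).
  destruct (chain_cases q) as [[Hq ->]|[[_ ->]|[_ ->]]]; [|coords|coords].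
  pose proof (scaled_range (n - q) n ltac:(unfold in1; lia)). coords.
Qed.

Lemma chain_descends p q : (p < q <= n)%nat -> Y (chain q) + 2 * M <= Y (chain p).
Proof.
  intros H. pose proof (scaled_range (n - p) n ltac:(unfold in1; lia)).
  destruct (chain_cases p) as [[Hp ->]|[[Hp ->]|[Hp ->]]]; try lia.
  destruct (chain_cases q) as [[Hq ->]|[[Hq ->]|[Hq ->]]]; try lia; [|coords].
  pose proof (scaled_gap (n - q) (n - p) ltac:(lia)). coords.
Qed.

Lemma chain_advances p q : (n <= p < q)%nat -> X (chain p) + 2 * M <= X (chain q).
Proof.
  intros H. rewrite !vx_column.
  destruct (chain_cases q) as [[Hq ->]|[[Hq ->]|[Hq ->]]]; try lia.
  destruct (chain_cases p) as [[Hp Ep]|[[Hp Ep]|[Hp Ep]]]; rewrite Ep; try lia; simpl.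
  - pose proof (scaled_gap 0 (q - n) ltac:(lia)); simpl in *; lra.
  - pose proof (scaled_gap (p - n) (q - n) ltac:(lia)); lra.
Qed.

Lemma chain_apart_lt p q : (p < q)%nat -> apart_at I (chain p) (chain q).
Proof.
  intros Hpq. destruct (Nat.le_gt_cases q n); [|destruct (Nat.le_gt_cases n p)].
  - apply apart_rows; right; apply chain_descends; lia.
  - unfold apart_at, apart; simpl. right; right; left; apply chain_advances; lia.
  - apply apart_rows; right. rewrite (chain_bottom q) by lia.
    rewrite <- (chain_bottom n) by lia. apply chain_descends; lia.
Qed.

Lemma chain_apart p q : p <> q -> apart_at I (chain p) (chain q).
Proof.
  intros Hne. destruct (Nat.lt_total p q) as [H|[H|H]]; [|lia|].
  - apply chain_apart_lt; auto.
  - apply apart_sym, chain_apart_lt; auto.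
Qed.

Lemma chain_adj q : (q < 2 * n)%nat -> vtx_adj n m (chain q) (chain (S q)).
Proof.
  intros H. unfold vtx_adj, base_edge.
  destruct (chain_cases q) as [[Q1 ->]|[[Q1 ->]|[Q1 ->]]];
  destruct (chain_cases (S q)) as [[Q2 ->]|[[Q2 ->]|[Q2 ->]]]; try lia.
  - right; right; right; left. exists (n - S q)%nat. split; [lia|].
    left; split; f_equal; lia.
  - left; right; right; right; left. replace (n - q)%nat with 1%nat by lia. auto.
  - left; right; right; right; right. replace (S q - n)%nat with 1%nat by lia. subst; auto.
  - left; right; right; left. exists (q - n)%nat. split; [lia|].
    right; split; f_equal; lia.
Qed.

Lemma chain_X_left q : (q <= n)%nat -> X (chain q) = 0.
Proof. intros H. rewrite vx_column, chain_left by auto. simpl; ring. Qed.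

Lemma chain_clear p q : p <> q -> p <> S q -> clear_of I (chain p) (chain q) (chain (S q)).
Proof.
  intros H1 H2. unfold clear_of; simpl.
  destruct (Nat.le_gt_cases (S q) n).
  - rewrite (chain_X_left q), (chain_X_left (S q)) by lia.
    destruct (Nat.lt_total p q) as [Hp|[Hp|Hp]]; [|lia|].
    + apply seg_apart_above; apply chain_descends; lia.
    + destruct (Nat.le_gt_cases p n).
      * apply seg_apart_below; apply chain_descends; lia.
      * rewrite <- (chain_X_left n) by lia.
        apply seg_apart_right; apply chain_advances; lia.
  - rewrite (chain_bottom q), (chain_bottom (S q)) by lia.
    destruct (Nat.lt_total p q) as [Hp|[Hp|Hp]]; [|lia|].
    + destruct (Nat.le_gt_cases n p).
      * apply seg_apart_left; apply chain_advances; lia.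
      * rewrite <- (chain_bottom n) by lia.
        apply seg_apart_above; apply chain_descends; lia.
    + apply seg_apart_right; apply chain_advances; lia.
Qed.

(* The b-agent [AbJ i] starts at [chain (n - i)] and [AbK] at [chain n]; [bpos]
   maps the index of a b-agent's start to the index of its current vertex. *)
Definition layout (vpos cpos : nat -> vtx) (bpos : nat -> nat) : config I :=
  fun a => match a with
  | Av i => vpos i
  | Acl j => cpos j
  | AbJ i => chain (bpos (n - i)%nat)
  | AbK => chain (bpos n)
  end.

Lemma safe_layout vpos cpos bpos :
  (forall i, in1 i n -> vtx_valid n m (vpos i) /\ column (vpos i) = i) ->
  (forall j, in1 j m -> vtx_valid n m (cpos j)) ->
  (forall b, (b <= n)%nat -> (bpos b <= 2 * n)%nat) ->
  (forall b b', (b <= n)%nat -> (b' <= n)%nat -> b <> b' -> bpos b <> bpos b') ->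
  (forall j j', in1 j m -> in1 j' m -> j <> j' -> apart_at I (cpos j) (cpos j')) ->
  (forall i j, in1 i n -> in1 j m -> apart_at I (vpos i) (cpos j)) ->
  (forall i b, in1 i n -> (b <= n)%nat -> apart_at I (vpos i) (chain (bpos b))) ->
  (forall j b, in1 j m -> (b <= n)%nat -> apart_at I (cpos j) (chain (bpos b))) ->
  safe I (layout vpos cpos bpos).
Proof.
  intros Hv Hc Hb Hbinj Hcc Hvc Hvb Hcb. apply safe_of_apart.
  - simpl; pose proof scale_facts; lra.
  - intros [i|j|i|] Ha; simpl in *; unfold in1 in *;
      [apply Hv | apply Hc | apply chain_valid, Hb | apply chain_valid, Hb]; auto; lia.
  - intros [i|j|i|] [i'|j'|i'|] Ha Hb' Hab; simpl in *; unfold in1 in *;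
      try solve [ apply chain_apart, Hbinj; try lia; intro E; apply Hab; f_equal; lia
                | first [apply Hvc | apply Hvb | apply Hcb]; unfold in1; lia
                | apply apart_sym; first [apply Hvc | apply Hvb | apply Hcb]; unfold in1; lia ].
    + apply apart_columns. rewrite (proj2 (Hv i Ha)), (proj2 (Hv i' Hb')). congruence.
    + apply Hcc; auto; congruence.
    + congruence.
Qed.

Lemma apart_chain_left v q : column v <> 0%nat -> (q <= n)%nat -> apart_at I v (chain q).
Proof. intros Hv Hq. apply apart_columns. rewrite chain_left; auto. Qed.

Variable asg : nat -> bool.

Definition target (i : nat) : vtx := if asg i then VB i else VC i.

Lemma target_valid i : in1 i n -> vtx_valid n m (target i) /\ column (target i) = i.
Proof. intros H; unfold target; destruct (asg i); simpl; auto. Qed.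

Lemma target_Y i : 2 * M ^ 2 + M <= Y (target i).
Proof. unfold target; destruct (asg i); coords. Qed.

Lemma target_chain_apart i q : in1 i n -> apart_at I (target i) (chain q).
Proof.
  intros Hi. destruct (Nat.le_gt_cases q n).
  - apply apart_chain_left; auto. rewrite (proj2 (target_valid i Hi)). unfold in1 in Hi; lia.
  - apply apart_rows; right. rewrite chain_bottom by lia. pose proof (target_Y i); coords.
Qed.

Lemma target_clear_chain i q : in1 i n -> clear_of I (target i) (chain q) (chain (S q)).
Proof.
  intros Hi. destruct (Nat.le_gt_cases (S q) n).
  - apply clear_of_columns; rewrite ?chain_left by lia; auto.
    rewrite (proj2 (target_valid i Hi)). unfold in1 in Hi; lia.
  - unfold clear_of; simpl. rewrite (chain_bottom q), (chain_bottom (S q)) by lia.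
    pose proof (target_Y i). apply seg_apart_above; coords.
Qed.

Section MovingVandB.
Variable cpos : nat -> vtx.
Hypothesis cpos_valid : forall j, in1 j m -> vtx_valid n m (cpos j).
Hypothesis cpos_left : forall j, column (cpos j) = 0%nat.
Hypothesis cpos_apart :
  forall j j', in1 j m -> in1 j' m -> j <> j' -> apart_at I (cpos j) (cpos j').
Hypothesis cpos_high : forall j, in1 j m -> chain_top + 2 * M <= Y (cpos j).

Lemma cpos_chain_apart j q : in1 j m -> (q <= 2 * n)%nat -> apart_at I (cpos j) (chain q).
Proof.
  intros Hj Hq. apply apart_rows; right.
  pose proof (chain_Y_range q Hq); pose proof (cpos_high j Hj); lra.
Qed.

Lemma cpos_clear_chain j q :
  in1 j m -> (q < 2 * n)%nat -> clear_of I (cpos j) (chain q) (chain (S q)).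
Proof.
  intros Hj Hq. pose proof (chain_Y_range q ltac:(lia)).
  pose proof (chain_Y_range (S q) ltac:(lia)). pose proof (cpos_high j Hj).
  unfold clear_of; simpl in *. apply seg_apart_above; lra.
Qed.

Lemma apart_cpos v j : column v <> 0%nat -> apart_at I v (cpos j).
Proof. intros Hv. apply apart_columns. rewrite cpos_left; auto. Qed.

Definition v_position (p i : nat) : vtx := if (i <=? p)%nat then target i else VA i.
Definition stage_v (p : nat) : config I := layout (v_position p) cpos (fun b => b).

Lemma v_position_valid p i :
  in1 i n -> vtx_valid n m (v_position p i) /\ column (v_position p i) = i.
Proof.
  intros H; unfold v_position; destruct (i <=? p)%nat; [apply target_valid|simpl]; auto.
Qed.

Lemma safe_stage_v p : safe I (stage_v p).
Proof.
  assert (Hcol : forall i, in1 i n -> column (v_position p i) <> 0%nat).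
  { intros i Hi. rewrite (proj2 (v_position_valid p i Hi)). unfold in1 in Hi; lia. }
  apply safe_layout; auto.
  - apply v_position_valid.
  - intros; lia.
  - intros i j Hi Hj; apply apart_cpos; auto.
  - intros i b Hi Hb; apply apart_chain_left; auto.
  - intros j b Hj Hb; apply cpos_chain_apart; auto; lia.
Qed.

Lemma step_stage_v p : (p < n)%nat -> safe_step I (stage_v p) (stage_v (S p)).
Proof.
  intros Hp.
  assert (Hcol : forall p', column (v_position p' (S p)) = S p)
    by (intros; apply v_position_valid; unfold in1; lia).
  apply safe_step_of_clear with (a := Av (S p)).
  - apply vtx_adj_irrefl.
  - simpl; unfold in1; lia.
  - simpl; unfold v_position.
    rewrite (proj2 (Nat.leb_gt (S p) p)), (proj2 (Nat.leb_le (S p) (S p))) by lia.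
    unfold target; destruct (asg (S p)); left; left; exists (S p); split; unfold in1; auto; lia.
  - intros [i|j|i|] Hb Hba; simpl; auto. unfold v_position.
    assert (i <> S p) by congruence.
    destruct (Nat.leb_spec i p); destruct (Nat.leb_spec i (S p)); auto; lia.
  - intros [i|j|i|] Hb Hba; simpl in *; apply clear_of_columns; rewrite ?Hcol; auto.
    + rewrite (proj2 (v_position_valid p i Hb)). congruence.
    + rewrite cpos_left. lia.
    + rewrite chain_left by lia. lia.
    + rewrite chain_left by lia. lia.
Qed.

Lemma reach_stage_v : reach I (stage_v 0) (stage_v n).
Proof. apply reach_path; intros; [apply safe_stage_v|apply step_stage_v; auto]. Qed.

(* In round [k] the b-agent starting at [chain (n - k)] walks [n] steps; the
   agents of earlier rounds have already moved [n] steps. *)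
Definition b_position (k s b : nat) : nat :=
  if (n - k <? b)%nat then (b + n)%nat else if (b =? n - k)%nat then (b + s)%nat else b.
Definition stage_b (k s : nat) : config I := layout target cpos (b_position k s).

Definition b_agent (k : nat) : agent := match k with O => AbK | S _ => AbJ k end.

Lemma layout_b_agent vpos cp bpos k :
  (k <= n)%nat -> layout vpos cp bpos (b_agent k) = chain (bpos (n - k)%nat).
Proof. intros. destruct k; simpl; auto. rewrite Nat.sub_0_r; auto. Qed.

Lemma b_position_bound k s b : (s <= n)%nat -> (b <= n)%nat -> (b_position k s b <= 2 * n)%nat.
Proof.
  intros. unfold b_position.
  destruct (Nat.ltb_spec (n - k) b); [lia|]. destruct (Nat.eqb_spec b (n - k)); lia.
Qed.

Lemma b_position_inj k s b b' : (s <= n)%nat -> (b <= n)%nat -> (b' <= n)%nat -> b <> b' ->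
  b_position k s b <> b_position k s b'.
Proof.
  intros. unfold b_position.
  destruct (Nat.ltb_spec (n - k) b); destruct (Nat.ltb_spec (n - k) b');
  try destruct (Nat.eqb_spec b (n - k)); try destruct (Nat.eqb_spec b' (n - k)); lia.
Qed.

Lemma b_position_mover k s : (k <= n)%nat -> b_position k s (n - k) = (n - k + s)%nat.
Proof.
  intros. unfold b_position. rewrite (proj2 (Nat.ltb_ge _ _)), Nat.eqb_refl by lia. auto.
Qed.

Lemma safe_stage_b k s : (s <= n)%nat -> safe I (stage_b k s).
Proof.
  intros Hs. apply safe_layout; auto.
  - apply target_valid.
  - intros; apply b_position_bound; auto.
  - intros; apply b_position_inj; auto.
  - intros i j Hi Hj; apply apart_cpos.
    rewrite (proj2 (target_valid i Hi)). unfold in1 in Hi; lia.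
  - intros; apply target_chain_apart; auto.
  - intros; apply cpos_chain_apart; auto; apply b_position_bound; auto.
Qed.

Lemma step_stage_b k s :
  (k <= n)%nat -> (s < n)%nat -> safe_step I (stage_b k s) (stage_b k (S s)).
Proof.
  intros Hk Hs. unfold stage_b.
  apply safe_step_of_clear with (a := b_agent k).
  - apply vtx_adj_irrefl.
  - destruct k; simpl; unfold in1; auto; lia.
  - rewrite !layout_b_agent, !b_position_mover by auto.
    rewrite Nat.add_succ_r. apply chain_adj; lia.
  - intros [i|j|i|] Hb Hba; simpl in *; auto; f_equal; unfold b_position.
    + assert (n - i <> n - k)%nat.
      { destruct k; simpl in Hba; unfold in1 in Hb; [lia|]. assert (i <> S k) by congruence; lia. }
      destruct (Nat.ltb_spec (n - k) (n - i)); auto.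
      destruct (Nat.eqb_spec (n - i) (n - k)); auto; lia.
    + destruct k; simpl in Hba; [congruence|].
      destruct (Nat.ltb_spec (n - S k) n); auto.
      destruct (Nat.eqb_spec n (n - S k)); auto; lia.
  - rewrite !layout_b_agent, !b_position_mover by auto. rewrite Nat.add_succ_r.
    intros [i|j|i|] Hb Hba; simpl in *.
    + apply target_clear_chain; auto.
    + apply cpos_clear_chain; auto; lia.
    + assert (n - i <> n - k)%nat.
      { destruct k; simpl in Hba; unfold in1 in Hb; [lia|]. assert (i <> S k) by congruence; lia. }
      apply chain_clear; unfold b_position; destruct (Nat.ltb_spec (n - k) (n - i));
        try destruct (Nat.eqb_spec (n - i) (n - k)); unfold in1 in *; lia.
    + destruct k; simpl in Hba; [congruence|].
      apply chain_clear; unfold b_position; destruct (Nat.ltb_spec (n - S k) n);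
        try destruct (Nat.eqb_spec n (n - S k)); lia.
Qed.

Lemma agree_layout_b vpos cp bpos bpos' :
  (forall b, (b <= n)%nat -> bpos b = bpos' b) ->
  agree I (layout vpos cp bpos) (layout vpos cp bpos').
Proof. intros H [i|j|i|] Ha; simpl; auto; rewrite H; auto; lia. Qed.

Lemma reach_stage_b : reach I (stage_b 0 0) (stage_b n n).
Proof.
  enough (H : forall k, (k <= n)%nat -> reach I (stage_b 0 0) (stage_b k n)) by auto.
  assert (Round : forall k, (k <= n)%nat -> reach I (stage_b k 0) (stage_b k n)).
  { intros k Hk. apply reach_path with (f := stage_b k).
    - intros; apply safe_stage_b; auto.
    - intros; apply step_stage_b; auto. }
  induction k as [|k IH]; intros Hk; [apply Round; lia|].
  apply reach_trans with (stage_b k n); [apply IH; lia|].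
  apply (reach_agree_l _ (stage_b (S k) 0)); [|apply Round; auto].
  apply agree_layout_b. intros b Hb. unfold b_position.
  destruct (Nat.ltb_spec (n - k) b); destruct (Nat.ltb_spec (n - S k) b);
    try destruct (Nat.eqb_spec b (n - k)); try destruct (Nat.eqb_spec b (n - S k)); lia.
Qed.

Definition park : config I := layout target cpos (fun b => (b + n)%nat).

Lemma reach_park : reach I (layout VA cpos (fun b => b)) park.
Proof.
  apply (reach_agree_l _ (stage_v 0)).
  { intros [i|j|i|] Ha; simpl in *; auto.
    unfold v_position. rewrite (proj2 (Nat.leb_gt i 0)); auto. unfold in1 in Ha; lia. }
  apply reach_trans with (stage_v n); [apply reach_stage_v|].
  apply (reach_agree_l _ (stage_b 0 0)).
  { intros [i|j|i|] Ha; simpl in *; unfold in1 in *; unfold v_position, b_position.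
    - rewrite (proj2 (Nat.leb_le i n)); auto; lia.
    - auto.
    - destruct (Nat.ltb_spec (n - 0) (n - i)); try destruct (Nat.eqb_spec (n - i) (n - 0));
        f_equal; lia.
    - destruct (Nat.ltb_spec (n - 0) n); try destruct (Nat.eqb_spec n (n - 0)); f_equal; lia. }
  apply (reach_agree_r _ _ (stage_b n n)); [|apply reach_stage_b].
  apply agree_layout_b. intros b Hb. unfold b_position.
  destruct (Nat.ltb_spec (n - n) b); try destruct (Nat.eqb_spec b (n - n)); lia.
Qed.
End MovingVandB.

Hypothesis lvar_range : forall j k, in1 j m -> (k < 3)%nat -> in1 (lvar (cl j k)) n.
Hypothesis asg_satisfies :
  forall j, in1 j m -> exists k, (k < 3)%nat /\ lit_true asg (cl j k).

Definition lit_holds (j k : nat) : bool := Bool.eqb (asg (lvar (cl j k))) (lpos (cl j k)).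
Definition chosen (j : nat) : nat :=
  if lit_holds j 0 then 0%nat else if lit_holds j 1 then 1%nat else 2%nat.

Lemma chosen_spec j : in1 j m -> (chosen j < 3)%nat /\ lit_true asg (cl j (chosen j)).
Proof.
  intros Hj. destruct (asg_satisfies j Hj) as [k [Hk Ht]]. unfold lit_true in *.
  unfold chosen, lit_holds.
  destruct (Bool.eqb_spec (asg (lvar (cl j 0))) (lpos (cl j 0))); [split; auto; lia|].
  destruct (Bool.eqb_spec (asg (lvar (cl j 1))) (lpos (cl j 1))); [split; auto; lia|].
  split; [lia|]. destruct k as [|[|[|k]]]; tauto || lia.
Qed.

Definition crossing (j : nat) : vtx := VF j (chosen j).
Definition crossing_var (j : nat) : nat := lvar (cl j (chosen j)).

Lemma crossing_facts j : in1 j m ->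
  vtx_valid n m (crossing j) /\ in1 (crossing_var j) n /\
  ((target (crossing_var j) = VB (crossing_var j) /\
      Y (crossing j) = INR j + 2 * M ^ 2 + 2 * M - 1) \/
   (target (crossing_var j) = VC (crossing_var j) /\
      Y (crossing j) = INR j + 4 * M ^ 2 * N + 2 * M ^ 2 + 2 * M * N + 3 * M - 1)).
Proof.
  intros Hj. destruct (chosen_spec j Hj) as [Hc Ht]. unfold lit_true in Ht.
  split; [simpl; auto|split; [apply lvar_range; auto|]].
  unfold target, crossing_var, crossing; simpl. rewrite Ht.
  destruct (lpos (cl j (chosen j))); [left|right]; auto.
Qed.

Lemma crossing_X j : X (crossing j) = P * INR (crossing_var j).
Proof. reflexivity. Qed.

Lemma target_crossing_apart i j : in1 i n -> in1 j m -> apart_at I (target i) (crossing j).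
Proof.
  intros Hi Hj. destruct (crossing_facts j Hj) as (_ & Hv & Hpos).
  destruct (Nat.eq_dec i (crossing_var j)) as [->|Hne].
  - apply apart_rows. destruct (in1_INR j m Hj).
    destruct Hpos as [(-> & ->)|(-> & ->)]; [right|left]; coords.
  - apply apart_columns. rewrite (proj2 (target_valid i Hi)). auto.
Qed.

Definition resting (j : nat) (v : vtx) : Prop := v = VD j \/ v = VH j \/ v = VI j.
Definition on_route (j : nat) (v : vtx) : Prop :=
  resting j v \/ v = VE j \/ v = VG j \/ v = crossing j.

Lemma on_route_valid j v : in1 j m -> on_route j v -> vtx_valid n m v.
Proof.
  intros Hj [[->|[->| ->]]|[->|[->| ->]]]; simpl; auto. apply crossing_facts; auto.
Qed.

Lemma on_route_Y j v : in1 j m -> on_route j v -> 2 * M <= Y v.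
Proof.
  intros Hj Hv. destruct (in1_INR j m Hj). destruct (scaled_range j m Hj).
  destruct Hv as [[->|[->| ->]]|[->|[->| ->]]]; try coords.
  destruct (crossing_facts j Hj) as (_ & _ & [(_ & ->)|(_ & ->)]); coords.
Qed.

Lemma apart_resting j j' u v : in1 j m -> in1 j' m -> j <> j' ->
  resting j u -> resting j' v -> apart_at I u v.
Proof.
  intros Hj Hj' Hne Hu Hv. apply apart_rows.
  pose proof (scaled_range j m Hj); pose proof (scaled_range j' m Hj').
  destruct (columns_apart j j' Hne);
  destruct Hu as [->|[->| ->]]; destruct Hv as [->|[->| ->]]; coords.
Qed.

Lemma apart_route_resting j j' u v : in1 j m -> in1 j' m -> j <> j' ->
  on_route j u -> resting j' v -> apart_at I u v.
Proof.
  intros Hj Hj' Hne [Hu|[->|[->| ->]]] Hv; [apply (apart_resting j j'); auto| | |].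
  1,2: apply apart_rows; pose proof (scaled_range j m Hj); pose proof (scaled_range j' m Hj');
       destruct (in1_INR j m Hj); destruct Hv as [->|[->| ->]]; coords.
  apply apart_columns. destruct (crossing_facts j Hj) as (_ & Hc & _).
  unfold crossing_var in Hc.
  destruct Hv as [->|[->| ->]]; simpl; unfold in1 in Hc; lia.
Qed.

Lemma apart_target_route i j v : in1 i n -> in1 j m -> on_route j v -> apart_at I (target i) v.
Proof.
  intros Hi Hj Hv.
  destruct Hv as [[->|[-> | ->]]|[->|[-> | ->]]]; [| | | | |apply target_crossing_apart; auto];
    apply apart_columns; rewrite (proj2 (target_valid i Hi)); simpl; unfold in1 in Hi; lia.
Qed.

Lemma safe_park_route cpos j0 :
  in1 j0 m -> on_route j0 (cpos j0) ->
  (forall j, in1 j m -> j <> j0 -> resting j (cpos j)) ->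
  safe I (park cpos).
Proof.
  intros Hj0 H0 Hrest.
  assert (Hon : forall j, in1 j m -> on_route j (cpos j)).
  { intros j Hj. destruct (Nat.eq_dec j j0) as [->|Hne]; [auto|left; auto]. }
  apply safe_layout.
  - apply target_valid.
  - intros j Hj; apply (on_route_valid j); auto.
  - intros; lia.
  - intros; lia.
  - intros j j' Hj Hj' Hne.
    destruct (Nat.eq_dec j j0) as [->|H1]; [apply (apart_route_resting j0 j'); auto|].
    destruct (Nat.eq_dec j' j0) as [->|H2].
    + apply apart_sym, (apart_route_resting j0 j); auto.
    + apply (apart_resting j j'); auto.
  - intros i j Hi Hj; apply (apart_target_route i j); auto.
  - intros i b Hi Hb; apply target_chain_apart; auto.
  - intros j b Hj Hb. apply apart_rows; right.
    rewrite chain_bottom by lia. pose proof (on_route_Y j (cpos j) Hj (Hon j Hj)); lra.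
Qed.

Lemma agree_layout_c vpos cpos cpos' bpos :
  (forall j, in1 j m -> cpos j = cpos' j) ->
  agree I (layout vpos cpos bpos) (layout vpos cpos' bpos).
Proof. intros H [i|j|i|] Ha; simpl; auto. Qed.

Definition sweep (route : nat -> nat -> vtx) (j s : nat) : config I :=
  park (fun j' => if (j' <? j)%nat then VH j'
                  else if (j' =? j)%nat then route j s else route j' 0%nat).

Section Sweep.
Variables (route : nat -> nat -> vtx) (len : nat).
Hypothesis route_on : forall j s, in1 j m -> (s <= len)%nat -> on_route j (route j s).
Hypothesis route_start : forall j, in1 j m -> resting j (route j 0%nat).
Hypothesis route_end : forall j, route j len = VH j.
Hypothesis route_adj :
  forall j s, in1 j m -> (s < len)%nat -> vtx_adj n m (route j s) (route j (S s)).
Hypothesis route_clear_target : forall i j s, in1 i n -> in1 j m -> (s < len)%nat ->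
  clear_of I (target i) (route j s) (route j (S s)).
Hypothesis route_clear_done : forall j j' s, in1 j m -> in1 j' m -> (j' < j)%nat ->
  (s < len)%nat -> clear_of I (VH j') (route j s) (route j (S s)).
Hypothesis route_clear_todo : forall j j' s, in1 j m -> in1 j' m -> (j < j')%nat ->
  (s < len)%nat -> clear_of I (route j' 0%nat) (route j s) (route j (S s)).

Lemma sweep_mover j s : sweep route j s (Acl j) = route j s.
Proof. simpl. rewrite Nat.ltb_irrefl, Nat.eqb_refl. auto. Qed.

Lemma safe_sweep j s : in1 j m -> (s <= len)%nat -> safe I (sweep route j s).
Proof.
  intros Hj Hs. apply (safe_park_route _ j); auto.
  - rewrite Nat.ltb_irrefl, Nat.eqb_refl. auto.
  - intros j' Hj' Hne. destruct (Nat.ltb_spec j' j); [right; left; auto|].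
    destruct (Nat.eqb_spec j' j); [lia|auto].
Qed.

Lemma step_sweep j s :
  in1 j m -> (s < len)%nat -> safe_step I (sweep route j s) (sweep route j (S s)).
Proof.
  intros Hj Hs. apply safe_step_of_clear with (a := Acl j).
  - apply vtx_adj_irrefl.
  - exact Hj.
  - rewrite !sweep_mover. apply route_adj; auto.
  - intros [i|j'|i|] Hb Hba; simpl; auto.
    assert (j' <> j) by congruence.
    destruct (j' <? j)%nat; auto. destruct (Nat.eqb_spec j' j); [lia|auto].
  - rewrite !sweep_mover. intros [i|j'|i|] Hb Hba; simpl in Hb.
    + apply route_clear_target; auto.
    + assert (j' <> j) by congruence. simpl.
      destruct (Nat.ltb_spec j' j); [apply route_clear_done; auto|].
      destruct (Nat.eqb_spec j' j); [lia|apply route_clear_todo; auto; lia].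
    + unfold clear_of; simpl. rewrite chain_bottom by lia.
      pose proof (on_route_Y j _ Hj (route_on j s Hj ltac:(lia))).
      pose proof (on_route_Y j _ Hj (route_on j (S s) Hj ltac:(lia))).
      apply seg_apart_below; lra.
    + unfold clear_of; simpl. rewrite chain_bottom by lia.
      pose proof (on_route_Y j _ Hj (route_on j s Hj ltac:(lia))).
      pose proof (on_route_Y j _ Hj (route_on j (S s) Hj ltac:(lia))).
      apply seg_apart_below; lra.
Qed.

Lemma reach_sweep : reach I (park (fun j => route j 0%nat)) (park VH).
Proof.
  assert (Round : forall j, in1 j m -> reach I (sweep route j 0) (sweep route j len)).
  { intros j Hj. apply reach_path with (f := sweep route j).
    - intros; apply safe_sweep; auto.
    - intros; apply step_sweep; auto. }
  assert (Hk : forall k, (1 <= k <= m)%nat -> reach I (sweep route 1 0) (sweep route k len)).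
  { induction k as [|k IH]; intros Hk; [lia|].
    destruct (Nat.eq_dec k 0) as [->|Hk0]; [apply Round; unfold in1; lia|].
    apply reach_trans with (sweep route k len); [apply IH; lia|].
    apply (reach_agree_l _ (sweep route (S k) 0)); [|apply Round; unfold in1; lia].
    apply agree_layout_c. intros j' Hj'.
    destruct (Nat.ltb_spec j' k); destruct (Nat.ltb_spec j' (S k));
      try destruct (Nat.eqb_spec j' k); try destruct (Nat.eqb_spec j' (S k));
      subst; auto; lia. }
  apply (reach_agree_l _ (sweep route 1 0)).
  { apply agree_layout_c. intros j Hj. unfold in1 in Hj.
    rewrite (proj2 (Nat.ltb_ge _ _)) by lia.
    destruct (Nat.eqb_spec j 1); subst; auto. }
  apply (reach_agree_r _ _ (sweep route m len)); [|apply Hk; lia].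
  apply agree_layout_c. intros j Hj. unfold in1 in Hj.
  destruct (Nat.ltb_spec j m); auto. destruct (Nat.eqb_spec j m); subst; auto; lia.
Qed.
End Sweep.

Lemma clear_ofE w u v :
  clear_of I w u v = seg_apart M (X w) (Y w) (X u) (Y u) (X v) (Y v).
Proof. reflexivity. Qed.

Lemma clear_under_diagonal w O F :
  X O = 0 -> P <= X F <= P * N -> X w + 2 * M + 1 <= X F -> Y F < Y O ->
  Y w + M <= Y F -> M * (P * N) <= Y O - Y F ->
  clear_of I w O F /\ clear_of I w F O.
Proof.
  intros HO HF Hw HY Ha Hc. pose proof scale_facts.
  assert (HXF : 0 < X F) by (unfold Pc in HF; lra).
  assert (Hslope : (Y w + 2 * M - Y F) * X F <= (X F - X w - 2 * M) * (Y O - Y F)).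
  { assert ((Y w + 2 * M - Y F) * X F <= M * X F) by (apply Rmult_le_compat_r; lra).
    assert (M * X F <= M * (P * N)) by (apply Rmult_le_compat_l; lra).
    assert (1 * (Y O - Y F) <= (X F - X w - 2 * M) * (Y O - Y F))
      by (apply Rmult_le_compat_r; lra).
    lra. }
  pose proof (seg_apart_under_diagonal (INR m) (X w) (Y w) (Y O) (X F) (Y F) HXF HY Hslope).
  unfold clear_of; simpl; rewrite HO.
  split; [apply seg_apart_sym|]; auto.
Qed.

Lemma clear_over_diagonal w O F :
  X O = 0 -> P <= X F <= P * N -> X w + 2 * M + 1 <= X F -> Y O < Y F ->
  Y F + M <= Y w -> M * (P * N) <= Y F - Y O ->
  clear_of I w O F /\ clear_of I w F O.
Proof.
  intros HO HF Hw HY Ha Hc. pose proof scale_facts.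
  assert (HXF : 0 < X F) by (unfold Pc in HF; lra).
  assert (Hslope : (Y F - Y w + 2 * M) * X F <= (X F - X w - 2 * M) * (Y F - Y O)).
  { assert ((Y F - Y w + 2 * M) * X F <= M * X F) by (apply Rmult_le_compat_r; lra).
    assert (M * X F <= M * (P * N)) by (apply Rmult_le_compat_l; lra).
    assert (1 * (Y F - Y O) <= (X F - X w - 2 * M) * (Y F - Y O))
      by (apply Rmult_le_compat_r; lra).
    lra. }
  pose proof (seg_apart_over_diagonal (INR m) (X w) (Y w) (Y O) (X F) (Y F) HXF HY Hslope).
  unfold clear_of; simpl; rewrite HO.
  split; [apply seg_apart_sym|]; auto.
Qed.

Lemma crossing_X_range j : in1 j m -> P <= X (crossing j) <= P * N.
Proof.
  intros Hj. destruct (crossing_facts j Hj) as (_ & Hv & _).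
  rewrite crossing_X. destruct (scaled_range _ _ Hv). unfold Pc in *; lra.
Qed.

Definition diagonal_end (j : nat) (O : vtx) : Prop := O = VE j \/ O = VG j.

Lemma target_clear_diagonal i j O : in1 i n -> in1 j m -> diagonal_end j O ->
  clear_of I (target i) O (crossing j) /\ clear_of I (target i) (crossing j) O.
Proof.
  intros Hi Hj HO. pose proof (crossing_X_range j Hj).
  destruct (crossing_facts j Hj) as (_ & Hv & HF).
  assert (XO : X O = 0) by (destruct HO as [-> | ->]; reflexivity).
  destruct (in1_INR j m Hj).
  destruct (Nat.lt_total i (crossing_var j)) as [Hlt|[->|Hgt]].
  - pose proof (scaled_gap i (crossing_var j) Hlt).
    unfold target; destruct (asg i); destruct HF as [(_ & HY)|(_ & HY)].
    + rewrite !clear_ofE, HY, crossing_X.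
      split; apply seg_apart_above; destruct HO as [-> | ->]; coords.
    + apply clear_over_diagonal; rewrite ?HY, ?crossing_X; auto;
        destruct HO as [-> | ->]; coords.
    + apply clear_under_diagonal; rewrite ?HY, ?crossing_X; auto;
        destruct HO as [-> | ->]; coords.
    + rewrite !clear_ofE, HY, crossing_X.
      split; apply seg_apart_below; destruct HO as [-> | ->]; coords.
  - destruct HF as [(-> & HY)|(-> & HY)]; rewrite !clear_ofE, HY, crossing_X;
      destruct HO as [-> | ->];
      split; first [apply seg_apart_above; coords | apply seg_apart_below; coords].
  - pose proof (scaled_gap (crossing_var j) i Hgt). pose proof (scaled_range i n Hi).
    rewrite !clear_ofE, crossing_X, XO, (vx_column (target i)), (proj2 (target_valid i Hi)).
    split; apply seg_apart_right; lra.
Qed.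

Lemma VH_below j j' v : in1 j m -> in1 j' m -> (j' < j)%nat ->
  on_route j v -> v <> crossing j -> Y (VH j') + 2 * M <= Y v.
Proof.
  intros Hj Hj' Hlt Hv Hc. pose proof (scaled_gap j' j Hlt).
  pose proof (scaled_range j m Hj). destruct (in1_INR j m Hj).
  destruct Hv as [[->|[-> | ->]]|[->|[-> | ->]]]; coords || congruence.
Qed.

Lemma VH_clear_diagonal j j' O : in1 j m -> in1 j' m -> (j' < j)%nat -> diagonal_end j O ->
  clear_of I (VH j') O (crossing j) /\ clear_of I (VH j') (crossing j) O.
Proof.
  intros Hj Hj' Hlt HO. pose proof (crossing_X_range j Hj).
  pose proof (scaled_gap j' j Hlt). pose proof (scaled_range j m Hj).
  destruct (in1_INR j m Hj).
  destruct (crossing_facts j Hj) as (_ & _ & [(_ & HY)|(_ & HY)]).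
  - apply clear_under_diagonal; rewrite ?HY; auto; destruct HO as [-> | ->]; coords.
  - rewrite !clear_ofE, HY. split; apply seg_apart_below; destruct HO as [-> | ->]; coords.
Qed.

Definition route_from_D (j s : nat) : vtx :=
  match s with
  | O => VD j | 1 => VE j | 2 => crossing j | 3 => VG j | _ => VH j
  end%nat.

Lemma route_from_D_on j s : on_route j (route_from_D j s).
Proof.
  unfold on_route, resting.
  destruct s as [|[|[|[|s]]]]; simpl; auto 6.
Qed.

Lemma route_from_D_adj j s :
  in1 j m -> (s < 4)%nat -> vtx_adj n m (route_from_D j s) (route_from_D j (S s)).
Proof.
  intros Hj Hs. destruct (chosen_spec j Hj) as [Hc _].
  left; right; left. exists j; split; auto.
  destruct s as [|[|[|[|s]]]]; simpl; try lia.
  - left; auto.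
  - right; right; right. exists (chosen j); split; auto.
  - right; right; right. exists (chosen j); split; auto.
  - right; left; auto.
Qed.

Lemma route_from_D_below_D j j' s : in1 j m -> in1 j' m -> (j < j')%nat ->
  Y (route_from_D j s) + 2 * M <= Y (VD j').
Proof.
  intros Hj Hj' Hlt. pose proof (scaled_gap j j' Hlt).
  pose proof (scaled_range j m Hj). destruct (in1_INR j m Hj).
  destruct s as [|[|[|[|s]]]]; try coords.
  destruct (crossing_facts j Hj) as (_ & _ & [(_ & HY)|(_ & HY)]); simpl route_from_D;
    rewrite HY; coords.
Qed.

Lemma reach_D_to_H : reach I (park VD) (park VH).
Proof.
  apply (reach_sweep route_from_D 4).
  - intros; apply route_from_D_on.
  - intros j _; left; auto.
  - reflexivity.
  - apply route_from_D_adj.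
  - intros i j s Hi Hj Hs. destruct s as [|[|[|[|s]]]]; try lia;
      try (apply clear_of_columns; simpl; auto; rewrite (proj2 (target_valid i Hi));
           unfold in1 in Hi; lia).
    + apply (target_clear_diagonal i j (VE j)); auto. left; auto.
    + apply (target_clear_diagonal i j (VG j)); auto. right; auto.
  - intros j j' s Hj Hj' Hlt Hs. destruct s as [|[|[|[|s]]]]; try lia.
    + rewrite clear_ofE. apply seg_apart_below; apply (VH_below j); simpl; auto;
        try apply (route_from_D_on j 0); try apply (route_from_D_on j 1); discriminate.
    + apply (VH_clear_diagonal j j' (VE j)); auto. left; auto.
    + apply (VH_clear_diagonal j j' (VG j)); auto. right; auto.
    + rewrite clear_ofE. apply seg_apart_below; apply (VH_below j); simpl; auto;
        try apply (route_from_D_on j 3); try apply (route_from_D_on j 4); discriminate.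
  - intros j j' s Hj Hj' Hlt Hs. rewrite clear_ofE.
    apply seg_apart_above; apply route_from_D_below_D; auto.
Qed.

Definition route_from_I (j s : nat) : vtx := match s with O => VI j | _ => VH j end.

Lemma reach_I_to_H : reach I (park VI) (park VH).
Proof.
  apply (reach_sweep route_from_I 1).
  - intros j [|s] _ _; left; unfold resting; auto.
  - intros j _; right; right; auto.
  - reflexivity.
  - intros j s Hj Hs. replace s with 0%nat by lia.
    right; right; left. exists j; split; auto.
  - intros i j s Hi Hj Hs. replace s with 0%nat by lia.
    apply clear_of_columns; simpl; auto. rewrite (proj2 (target_valid i Hi)).
    unfold in1 in Hi; lia.
  - intros j j' s Hj Hj' Hlt Hs. replace s with 0%nat by lia.
    pose proof (scaled_gap j' j Hlt). pose proof (scaled_range j m Hj).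
    rewrite clear_ofE. apply seg_apart_below; coords.
  - intros j j' s Hj Hj' Hlt Hs. replace s with 0%nat by lia.
    pose proof (scaled_gap j j' Hlt). pose proof (scaled_range j' m Hj').
    rewrite clear_ofE. apply seg_apart_above; coords.
Qed.

Lemma reach_park_home (home : nat -> vtx) :
  home = VD \/ home = VI -> reach I (layout VA home (fun b => b)) (park home).
Proof.
  intros Hh. apply reach_park.
  - intros j Hj; destruct Hh as [-> | ->]; simpl; auto.
  - intros j; destruct Hh as [-> | ->]; reflexivity.
  - intros j j' Hj Hj' Hne. apply (apart_resting j j'); auto;
      destruct Hh as [-> | ->]; unfold resting; auto.
  - intros j Hj. unfold chain_top.
    pose proof (scaled_range j m Hj). pose proof (scaled_range n n ltac:(unfold in1; lia)).
    destruct Hh as [-> | ->]; coords.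
Qed.

Lemma agree_start : agree I (layout VA VD (fun b => b)) (start I).
Proof. intros [i|j|i|] Ha; simpl; auto using chain_home, chain_middle. Qed.

Lemma agree_goal : agree I (layout VA VI (fun b => b)) (goal I).
Proof. intros [i|j|i|] Ha; simpl; auto using chain_home, chain_middle. Qed.

Lemma reach_start_goal : reach I (start I) (goal I).
Proof.
  apply (reach_agree_l _ (layout VA VD (fun b => b))); [exact agree_start|].
  apply (reach_agree_r _ _ (layout VA VI (fun b => b))); [exact agree_goal|].
  apply reach_trans with (park VD); [apply reach_park_home; auto|].
  apply reach_trans with (park VH); [exact reach_D_to_H|].
  apply reach_trans with (park VI); apply reach_sym; try exact vtx_adj_sym.
  - exact reach_I_to_H.
  - apply reach_park_home; auto.
Qed.
End Construction.

Theorem lemma3 (n m : nat) (cl : nat -> nat -> lit) :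
  wf_3cnf n m cl -> satisfiable n m cl -> has_solution (Iphi n m cl).
Proof.
  intros [Hn [Hm Hwf]] [asg Hsat]. apply has_solution_of_reach.
  apply (reach_start_goal n m cl Hn Hm asg); auto.
  intros j k Hj Hk. exact (proj1 (Hwf j Hj) k Hk).
Qed.
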